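(* Let $\alpha,\beta>-1$, $M\ge0$, $a_0,\dots,a_M\in\mathbb{R}$ and $f_M(x)=\sum_{m=0}^M a_mP^{(\alpha,\beta)}_m(x)$. For integers $n\ge-1$ and $y\in[-1,1]$ let $\tilde R_n(y)=\int_{-1}^{y}f_M(y-1-t)P^{(\alpha,\beta)}_n(t)\,\mathrm{d}t$ (so $\tilde R_{-1}\equiv0$). Then for every integer $n\ge0$ and $y\in[-1,1]$, $$\tilde R_{n+1}(y)=\frac{1}{A_{n+1}}\int_{-1}^{y}\tilde R_n(s)\,\mathrm{d}s-\frac{B_n}{A_{n+1}}\tilde R_n(y)-\frac{C_{n-1}}{A_{n+1}}\tilde R_{n-1}(y)+\frac{S_n}{A_{n+1}}\int_{-1}^{y}f_M(t)\,\mathrm{d}t,$$ where $$S_n=\frac{2(-1)^{n+1}(\beta)_{n+1}}{(\alpha+\beta+n)(n+1)!}$$ (and the term $C_{n-1}\tilde R_{n-1}$ is $0$ when $n=0$).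
   Context: Jacobi polynomials: $P^{(\alpha,\beta)}_n(x)=\frac{(\alpha+1)_n}{n!}\,{}_2F_1\!\left(-n,\,n+\alpha+\beta+1;\,\alpha+1;\,\frac{1-x}{2}\right)$ for $n\ge0$, $P^{(\alpha,\beta)}_n:=0$ for $n<0$; $(a)_n=a(a+1)\cdots(a+n-1)$, $(a)_0=1$. The constants are $A_{m}=\dfrac{2(\alpha+\beta+m)}{(\alpha+\beta+2m-1)(\alpha+\beta+2m)}$, $B_m=\dfrac{2(\alpha-\beta)}{(\alpha+\beta+2m)(\alpha+\beta+2m+2)}$, $C_m=-\dfrac{2(\alpha+m+1)(\beta+m+1)}{(\alpha+\beta+m+1)(\alpha+\beta+2m+2)(\alpha+\beta+2m+3)}$; they satisfy $P^{(\alpha,\beta)}_n=A_{n+1}\frac{\mathrm d}{\mathrm dx}P^{(\alpha,\beta)}_{n+1}+B_n\frac{\mathrm d}{\mathrm dx}P^{(\alpha,\beta)}_n+C_{n-1}\frac{\mathrm d}{\mathrm dx}P^{(\alpha,\beta)}_{n-1}$. $\tilde R_n(y)$ is the convolution $\int_{-1}^{x+1}f_M(x-t)P^{(\alpha,\beta)}_n(t)\,\mathrm dt$ at $x=y-1$. *)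

From Stdlib Require Import Reals ZArith.
From Coquelicot Require Import Coquelicot.
Open Scope R_scope.

Fixpoint poch (a : R) (k : nat) : R :=
  match k with
  | O => 1
  | S k' => poch a k' * (a + INR k')
  end.

(* Jacobi polynomial P^{(al,be)}_n(x) for n >= 0 via the terminating 2F1
   (the series terminates at k = n since (-n)_k = 0 for k > n);
   P_n := 0 for n < 0. *)
Definition jacobi_nat (al be : R) (n : nat) (x : R) : R :=
  poch (al + 1) n / INR (fact n) *
  sum_f_R0 (fun k => poch (- INR n) k * poch (INR n + al + be + 1) k
                      / (poch (al + 1) k * INR (fact k)) * ((1 - x) / 2) ^ k) n.

Definition jacobi (al be : R) (n : Z) (x : R) : R :=
  if (n <? 0)%Z then 0 else jacobi_nat al be (Z.to_nat n) x.

Definition jacA (al be : R) (m : Z) : R :=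
  2 * (al + be + IZR m) / ((al + be + 2 * IZR m - 1) * (al + be + 2 * IZR m)).
Definition jacB (al be : R) (m : Z) : R :=
  2 * (al - be) / ((al + be + 2 * IZR m) * (al + be + 2 * IZR m + 2)).
Definition jacC (al be : R) (m : Z) : R :=
  - (2 * (al + IZR m + 1) * (be + IZR m + 1)) /
    ((al + be + IZR m + 1) * (al + be + 2 * IZR m + 2) * (al + be + 2 * IZR m + 3)).

Definition jacS (al be : R) (n : nat) : R :=
  2 * (-1) ^ (S n) * poch be (S n) / ((al + be + INR n) * INR (fact (S n))).

Definition fM (al be : R) (a : nat -> R) (M : nat) (x : R) : R :=
  sum_f_R0 (fun m => a m * jacobi al be (Z.of_nat m) x) M.

Definition Rtilde (al be : R) (a : nat -> R) (M : nat) (n : Z) (y : R) : R :=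
  RInt (fun t => fM al be a M (y - 1 - t) * jacobi al be n t) (-1) y.

(* In the variable u = (1 - x) / 2 every P_k is a polynomial whose coefficients are those of
   the terminating 2F1, and comparing coefficients gives the derivative recurrence
   P_n = A_{n+1} P'_{n+1} + B_n P'_n + C_{n-1} P'_{n-1}.  Hence
   Q := A_{n+1} P_{n+1} + B_n P_n + C_{n-1} P_{n-1} - S_n is an antiderivative of P_n, and it
   vanishes at -1 because P_k(-1) = (-1)^k (be+1)_k / k! by Chu-Vandermonde; this is where S_n
   comes from.
   After the substitution s = y - 1 - t, R_k(y) = int_{-1}^y f_M(s) P_k(y - 1 - s) ds is a
   convolution, linear in P_k.  Solving for P_{n+1} and convolving with f_M gives the theorem,
   once int_{-1}^y (f_M * P_n) = f_M * Q; this holds because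
   d/dy (f_M * Q)(y) = (f_M * P_n)(y) + f_M(y) Q(-1) and Q(-1) = 0. *)

From Stdlib Require Import Reals ZArith Lra Lia.
From Coquelicot Require Import Coquelicot.
Open Scope R_scope.

Lemma poch_S a k : poch a (S k) = poch a k * (a + INR k).
Proof. reflexivity. Qed.

Lemma poch_S_l a k : poch a (S k) = a * poch (a + 1) k.
Proof.
  revert a; induction k as [|k IH]; intro a; [simpl; ring|].
  rewrite poch_S, IH, poch_S, S_INR; ring.
Qed.

Lemma poch_gt0 a k : 0 < a -> 0 < poch a k.
Proof.
  intro Ha; induction k as [|k IH]; [simpl; lra|].
  rewrite poch_S; pose proof (pos_INR k); apply Rmult_lt_0_compat; lra.
Qed.

Lemma poch_opp_INR_eq0 n k : (n < k)%nat -> poch (- INR n) k = 0.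
Proof.
  induction k as [|k IH]; intro Hnk; [lia|].
  rewrite poch_S; destruct (Nat.eq_dec n k) as [->|Hne]; [ring|].
  rewrite IH by lia; ring.
Qed.

Lemma poch_sub1_S a k : poch (a - 1) (S k) = (a - 1) * poch a k.
Proof. rewrite poch_S_l; replace (a - 1 + 1) with a by ring; reflexivity. Qed.

Lemma poch_add1_S a k : a <> 0 ->
  poch (a + 1) (S k) = poch a k * (a + INR k) * (a + INR (S k)) / a.
Proof. intro Ha; rewrite <- !poch_S, (poch_S_l a (S k)); field; exact Ha. Qed.

Lemma poch_opp_sub n b : poch (- INR n - b) n = (-1) ^ n * poch (b + 1) n.
Proof.
  induction n as [|n IH]; [simpl; ring|].
  rewrite poch_S_l; replace (- INR (S n) - b + 1) with (- INR n - b) by (rewrite S_INR; ring).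
  rewrite IH, poch_S, S_INR; simpl pow; ring.
Qed.

Lemma INR_fact_S k : INR (fact (S k)) = INR (S k) * INR (fact k).
Proof. rewrite fact_simpl, mult_INR; reflexivity. Qed.

Definition vandermonde_term (n : nat) (b c : R) (k : nat) : R :=
  poch (- INR n) k * poch b k / (poch c k * INR (fact k)).

Lemma vandermonde_term_S n b c k : 0 < c ->
  vandermonde_term (S n) b c (S k) =
  vandermonde_term n b c (S k) - vandermonde_term n (b + 1) (c + 1) k * (b / c).
Proof.
  intro Hc; unfold vandermonde_term.
  replace (- INR (S n)) with (- INR n - 1) by (rewrite S_INR; ring).
  rewrite poch_sub1_S, (poch_S (- INR n)), (poch_S_l b), (poch_S_l c), INR_fact_S.
  pose proof (poch_gt0 (c + 1) k ltac:(lra)); pose proof (INR_fact_neq_0 k).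
  pose proof (pos_INR k); rewrite S_INR.
  field; repeat split; lra.
Qed.

Lemma chu_vandermonde n : forall b c, 0 < c ->
  sum_f_R0 (vandermonde_term n b c) n = poch (c - b) n / poch c n.
Proof.
  induction n as [|n IH]; intros b c Hc.
  { unfold vandermonde_term; simpl; field. }
  assert (Hlast : vandermonde_term n b c (S n) = 0).
  { unfold vandermonde_term; rewrite poch_opp_INR_eq0 by lia; unfold Rdiv; ring. }
  rewrite decomp_sum by lia; simpl pred.
  rewrite (sum_eq _ _ _ (fun k _ => vandermonde_term_S n b c k Hc)), minus_sum, <- scal_sum.
  assert (Hshift : vandermonde_term n b c 0 + sum_f_R0 (fun k => vandermonde_term n b c (S k)) n
                   = sum_f_R0 (vandermonde_term n b c) n).
  { rewrite <- (Rplus_0_r (sum_f_R0 (vandermonde_term n b c) n)), <- Hlast, <- tech5.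
    rewrite (decomp_sum (vandermonde_term n b c) (S n)) by lia; reflexivity. }
  replace (vandermonde_term (S n) b c 0) with (vandermonde_term n b c 0)
    by (unfold vandermonde_term; simpl; ring).
  rewrite Rplus_minus_assoc, Hshift, !IH by lra.
  replace (c + 1 - (b + 1)) with (c - b) by ring.
  pose proof (poch_gt0 c n Hc); pose proof (poch_gt0 (c + 1) n ltac:(lra)); pose proof (pos_INR n).
  assert (Hc1 : poch c n = c * poch (c + 1) n / (c + INR n)).
  { rewrite <- poch_S_l, poch_S; field; lra. }
  rewrite (poch_S c), poch_S, Hc1.
  field; repeat split; lra.
Qed.

Definition upoly (c : nat -> R) (N : nat) (x : R) : R :=
  sum_f_R0 (fun k => c k * ((1 - x) / 2) ^ k) N.

Lemma upoly_ext c d N x : (forall k, (k <= N)%nat -> c k = d k) -> upoly c N x = upoly d N x.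
Proof. intro Hcd; apply sum_eq; intros k Hk; rewrite Hcd by exact Hk; reflexivity. Qed.

Lemma upoly_extend c n N x : (forall k, (n < k)%nat -> c k = 0) -> (n <= N)%nat ->
  upoly c N x = upoly c n x.
Proof.
  intros Hc HnN; unfold upoly; induction HnN as [|N HnN IH]; [reflexivity|].
  simpl; rewrite IH, Hc by lia; ring.
Qed.

Lemma upoly_plus c d N x : upoly (fun k => c k + d k) N x = upoly c N x + upoly d N x.
Proof. unfold upoly; rewrite <- plus_sum; apply sum_eq; intros; ring. Qed.

Lemma upoly_scal a c N x : upoly (fun k => a * c k) N x = a * upoly c N x.
Proof. unfold upoly; rewrite scal_sum; apply sum_eq; intros; ring. Qed.

Lemma is_derive_upoly c N x :
  is_derive (upoly c (S N)) x (upoly (fun k => - INR (S k) / 2 * c (S k)) N x).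
Proof.
  unfold upoly; induction N as [|N IH].
  - simpl; auto_derive; [auto|]; simpl; field.
  - eapply is_derive_ext; [intro t; symmetry; apply tech5|].
    rewrite tech5; apply (is_derive_plus _ _ _ _ _ IH).
    auto_derive; [auto|].
    change (match N with 0%nat => 1 | S _ => INR N + 1 end) with (INR (S N)).
    rewrite (S_INR (S N)); simpl pow; unfold Rminus, Rdiv; ring.
Qed.

Lemma continuous_upoly c N x : continuous (upoly c N) x.
Proof.
  destruct N as [|N].
  - apply (continuous_ext (fun _ => c 0%nat)); [intro t; unfold upoly; simpl; ring|].
    apply continuous_const.
  - apply (ex_derive_continuous (V := R_NormedModule)).
    eexists; apply is_derive_upoly.
Qed.

Definition jcoef (al be : R) (n k : nat) : R :=
  poch (al + 1) n / INR (fact n) *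
  (poch (- INR n) k * poch (INR n + al + be + 1) k / (poch (al + 1) k * INR (fact k))).

Lemma jcoef_eq0 al be n k : (n < k)%nat -> jcoef al be n k = 0.
Proof. intro Hnk; unfold jcoef; rewrite poch_opp_INR_eq0 by exact Hnk; unfold Rdiv; ring. Qed.

Lemma jacobi_nat_upoly al be n N x : (n <= N)%nat ->
  jacobi_nat al be n x = upoly (jcoef al be n) N x.
Proof.
  intro HnN; rewrite (upoly_extend _ n) by (auto using jcoef_eq0).
  unfold jacobi_nat, upoly; rewrite scal_sum; apply sum_eq; intros; unfold jcoef; ring.
Qed.

Lemma jacobi_of_nat al be n x : jacobi al be (Z.of_nat n) x = jacobi_nat al be n x.
Proof.
  unfold jacobi; destruct (Z.ltb_spec (Z.of_nat n) 0); [lia|].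
  rewrite Nat2Z.id; reflexivity.
Qed.

Lemma jacobi_succ al be n x : jacobi al be (Z.of_nat n + 1) x = jacobi_nat al be (S n) x.
Proof. rewrite <- jacobi_of_nat; f_equal; lia. Qed.

Lemma jacobi_pred al be m x : jacobi al be (Z.of_nat (S m) - 1) x = jacobi_nat al be m x.
Proof. rewrite <- jacobi_of_nat; f_equal; lia. Qed.

Lemma is_derive_jacobi al be n x :
  is_derive (jacobi al be (Z.of_nat n)) x
    (upoly (fun k => - INR (S k) / 2 * jcoef al be n (S k)) n x).
Proof.
  apply (is_derive_ext (upoly (jcoef al be n) (S n))).
  - intro t; rewrite jacobi_of_nat; symmetry; apply jacobi_nat_upoly; lia.
  - apply is_derive_upoly.
Qed.

Lemma continuous_jacobi al be z x : continuous (jacobi al be z) x.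
Proof.
  unfold jacobi; destruct (z <? 0)%Z; [apply continuous_const|].
  apply (continuous_ext (upoly (jcoef al be (Z.to_nat z)) (Z.to_nat z))).
  - intro t; symmetry; apply jacobi_nat_upoly; lia.
  - apply continuous_upoly.
Qed.

Lemma jacobi_nat_m1 al be n : -1 < al ->
  jacobi_nat al be n (-1) = (-1) ^ n * poch (be + 1) n / INR (fact n).
Proof.
  intro Hal; unfold jacobi_nat; replace ((1 - -1) / 2) with 1 by field.
  rewrite (sum_eq _ (vandermonde_term n (INR n + al + be + 1) (al + 1)))
    by (intros; unfold vandermonde_term; rewrite pow1; ring).
  rewrite chu_vandermonde by lra.
  replace (al + 1 - (INR n + al + be + 1)) with (- INR n - be) by ring.
  rewrite poch_opp_sub.
  pose proof (poch_gt0 (al + 1) n ltac:(lra)); pose proof (INR_fact_neq_0 n).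
  field; lra.
Qed.

Lemma IZR_of_nat_add1 n : IZR (Z.of_nat n + 1) = INR n + 1.
Proof. rewrite plus_IZR, <- INR_IZR_INZ; reflexivity. Qed.

Lemma IZR_of_nat_sub1 n : IZR (Z.of_nat n - 1) = INR n - 1.
Proof. rewrite minus_IZR, <- INR_IZR_INZ; reflexivity. Qed.

Definition jacobi_antideriv (al be : R) (n : nat) (x : R) : R :=
  jacA al be (Z.of_nat n + 1) * jacobi al be (Z.of_nat n + 1) x
  + jacB al be (Z.of_nat n) * jacobi al be (Z.of_nat n) x
  + jacC al be (Z.of_nat n - 1) * jacobi al be (Z.of_nat n - 1) x
  - jacS al be n.

Section JacobiAntiderivative.

Variables (al be : R) (n : nat).
Hypotheses (Hal : -1 < al) (Hbe : -1 < be)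
  (Hn0 : al + be + INR n <> 0) (Hn1 : al + be + INR n + 1 <> 0)
  (H2n0 : al + be + 2 * INR n <> 0) (H2n1 : al + be + 2 * INR n + 1 <> 0).

Lemma jacA_neq0 : jacA al be (Z.of_nat n + 1) <> 0.
Proof.
  unfold jacA; rewrite IZR_of_nat_add1; pose proof (pos_INR n).
  unfold Rdiv; apply Rmult_integral_contrapositive_currified; [lra|].
  apply Rinv_neq_0_compat, Rmult_integral_contrapositive_currified; lra.
Qed.

Lemma jacobi_antideriv_m1 : jacobi_antideriv al be n (-1) = 0.
Proof.
  unfold jacobi_antideriv, jacA, jacB, jacC, jacS.
  rewrite IZR_of_nat_add1, IZR_of_nat_sub1, <- INR_IZR_INZ, jacobi_succ, jacobi_of_nat.
  rewrite !jacobi_nat_m1 by exact Hal.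
  pose proof (pos_INR n).
  destruct n as [|m].
  - change (jacobi al be (Z.of_nat 0 - 1) (-1)) with 0.
    simpl in *; field; lra.
  - rewrite jacobi_pred, jacobi_nat_m1 by exact Hal.
    rewrite <- !tech_pow_Rmult, (poch_S_l be (S m)), !poch_S, !INR_fact_S, !S_INR in *.
    pose proof (INR_fact_neq_0 m); pose proof (pos_INR m).
    field; repeat split; lra.
Qed.

Lemma jcoef_recurrence m k : n = S m ->
  - INR (S k) / 2 *
    (jacA al be (Z.of_nat n + 1) * jcoef al be (S n) (S k)
     + jacB al be (Z.of_nat n) * jcoef al be n (S k)
     + jacC al be (Z.of_nat n - 1) * jcoef al be m (S k))
  = jcoef al be n k.
Proof.
  intros ->; unfold jacA, jacB, jacC, jcoef.
  rewrite IZR_of_nat_add1, IZR_of_nat_sub1, <- INR_IZR_INZ.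
  pose proof (pos_INR m); pose proof (pos_INR k).
  set (a := - INR (S m)); set (N := INR (S m) + al + be + 1).
  assert (Ha : a <> 0) by (unfold a; rewrite S_INR; lra).
  assert (HN : N <> 0) by (unfold N; rewrite S_INR; lra).
  replace (- INR (S (S m))) with (a - 1) by (unfold a; rewrite (S_INR (S m)); ring).
  replace (- INR m) with (a + 1) by (unfold a; rewrite S_INR; ring).
  replace (INR (S (S m)) + al + be + 1) with (N + 1) by (unfold N; rewrite (S_INR (S m)); ring).
  replace (INR m + al + be + 1) with (N - 1) by (unfold N; rewrite S_INR; ring).
  rewrite !poch_sub1_S, (poch_add1_S a), (poch_add1_S N) by assumption.
  rewrite !poch_S, !INR_fact_S.
  unfold a, N; rewrite !S_INR in *.
  pose proof (INR_fact_neq_0 m); pose proof (INR_fact_neq_0 k).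
  pose proof (poch_gt0 (al + 1) m ltac:(lra)); pose proof (poch_gt0 (al + 1) k ltac:(lra)).
  field; repeat split; lra.
Qed.

Lemma is_derive_jacobi_antideriv x :
  is_derive (jacobi_antideriv al be n) x (jacobi al be (Z.of_nat n) x).
Proof.
  pose proof jcoef_recurrence as Hrec.
  rewrite jacobi_of_nat, <- (Rminus_0_r (jacobi_nat al be n x)); unfold jacobi_antideriv.
  apply (is_derive_minus (V := R_NormedModule)); [|apply (is_derive_const (V := R_NormedModule))].
  destruct n as [|m].
  - apply (is_derive_ext (fun t => jacA al be (Z.of_nat 0 + 1) * jacobi_nat al be 1 t
                                  + jacB al be (Z.of_nat 0) * jacobi_nat al be 0 t)).
    { intro t; rewrite jacobi_succ, jacobi_of_nat.
      change (jacobi al be (Z.of_nat 0 - 1) t) with 0; rewrite Rmult_0_r, Rplus_0_r; reflexivity. }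
    simpl in *; unfold jacobi_nat, jacA; simpl.
    auto_derive; [auto|]; field; lra.
  - set (A := jacA al be (Z.of_nat (S m) + 1)); set (B := jacB al be (Z.of_nat (S m)));
      set (C := jacC al be (Z.of_nat (S m) - 1)).
    apply (is_derive_ext (upoly (fun k => A * jcoef al be (S (S m)) k + B * jcoef al be (S m) k
                                         + C * jcoef al be m k) (S (S m)))).
    { intro t; rewrite jacobi_succ, jacobi_of_nat, jacobi_pred.
      rewrite !(jacobi_nat_upoly _ _ _ (S (S m))) by lia.
      rewrite !upoly_plus, !upoly_scal; reflexivity. }
    rewrite (jacobi_nat_upoly _ _ _ (S m)) by lia.
    erewrite upoly_ext; [apply is_derive_upoly|].
    intros k _; rewrite <- (Hrec m k eq_refl); reflexivity.
Qed.

End JacobiAntiderivative.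

Lemma continuous_Rmult_l (k : R -> R) c x : continuous k x -> continuous (fun t => c * k t) x.
Proof. apply (continuous_scal_r (K := R_AbsRing) (V := R_NormedModule)). Qed.

Lemma continuous_Rplus (k1 k2 : R -> R) x :
  continuous k1 x -> continuous k2 x -> continuous (fun t => k1 t + k2 t) x.
Proof. apply (continuous_plus (V := R_NormedModule)). Qed.

Lemma continuous_jacobi_antideriv al be n x : continuous (jacobi_antideriv al be n) x.
Proof.
  unfold jacobi_antideriv, Rminus;
    auto using continuous_Rplus, continuous_Rmult_l, continuous_jacobi, continuous_const.
Qed.

Lemma continuous_fM al be a M x : continuous (fM al be a M) x.
Proof.
  unfold fM; induction M as [|M IH]; simpl;
    auto using continuous_Rplus, continuous_Rmult_l, continuous_jacobi.
Qed.

Definition conv (g k : R -> R) (y : R) : R := RInt (fun s => g s * k (y - 1 - s)) (-1) y.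

Lemma continuous_reflect (k : R -> R) y x : (forall z, continuous k z) ->
  continuous (fun t => k (y - 1 - t)) x.
Proof.
  intro Hk; apply (continuous_comp (fun t => y - 1 - t) k); [|apply Hk].
  apply (ex_derive_continuous (V := R_NormedModule)); auto_derive; auto.
Qed.

Section Convolution.

Variable g : R -> R.
Hypothesis Hg : forall z, continuous g z.

Lemma ex_RInt_conv (k : R -> R) y a b : (forall z, continuous k z) ->
  ex_RInt (fun s => g s * k (y - 1 - s)) a b.
Proof.
  intro Hk; apply (ex_RInt_continuous (V := R_CompleteNormedModule)); intros z _.
  apply (continuous_mult (K := R_AbsRing)); [apply Hg | apply continuous_reflect, Hk].
Qed.

Lemma RInt_reflect (k : R -> R) y : (forall z, continuous k z) ->
  RInt (fun t => g (y - 1 - t) * k t) (-1) y = conv g k y.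
Proof.
  intro Hk; set (F := fun t => g (y - 1 - t) * k t).
  assert (HF : forall a b, ex_RInt F a b).
  { intros a b; apply (ex_RInt_continuous (V := R_CompleteNormedModule)); intros z _.
    apply (continuous_mult (K := R_AbsRing)); [apply continuous_reflect, Hg | apply Hk]. }
  pose proof (RInt_comp_lin F (-1) (y - 1) (-1) y (HF _ _)) as E.
  replace (-1 * -1 + (y - 1)) with y in E by ring.
  replace (-1 * y + (y - 1)) with (-1) in E by ring.
  rewrite <- (opp_RInt_swap F) in E by apply HF.
  rewrite (RInt_ext _ (fun s => opp (g s * k (y - 1 - s)))) in E.
  2: { intros s _; unfold F; replace (y - 1 - (-1 * s + (y - 1))) with s by ring.
       replace (-1 * s + (y - 1)) with (y - 1 - s) by ring.
       change (-1 * (g s * k (y - 1 - s)) = - (g s * k (y - 1 - s))); ring. }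
  rewrite (RInt_opp (V := R_CompleteNormedModule)) in E by (apply ex_RInt_conv, Hk).
  unfold conv; rewrite <- (opp_opp (RInt F (-1) y)), <- E, opp_opp; reflexivity.
Qed.

Lemma conv_plus (k1 k2 : R -> R) y : (forall z, continuous k1 z) -> (forall z, continuous k2 z) ->
  conv g (fun t => k1 t + k2 t) y = conv g k1 y + conv g k2 y.
Proof.
  intros Hk1 Hk2; unfold conv; rewrite <- (RInt_plus (V := R_CompleteNormedModule));
    [|apply ex_RInt_conv; auto..].
  apply RInt_ext; intros; change (g x * (k1 (y - 1 - x) + k2 (y - 1 - x))
                                  = g x * k1 (y - 1 - x) + g x * k2 (y - 1 - x)); ring.
Qed.

Lemma conv_scal c (k : R -> R) y : (forall z, continuous k z) ->
  conv g (fun t => c * k t) y = c * conv g k y.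
Proof.
  intro Hk; unfold conv; rewrite <- (RInt_scal (V := R_CompleteNormedModule));
    [|apply ex_RInt_conv; auto].
  apply RInt_ext; intros; change (g x * (c * k (y - 1 - x)) = c * (g x * k (y - 1 - x))); ring.
Qed.

Lemma conv_one y : conv g (fun _ => 1) y = RInt g (-1) y.
Proof. apply RInt_ext; intros; apply Rmult_1_r. Qed.

Section Kernel.

Variables Q q : R -> R.
Hypotheses (HQ : forall z, is_derive Q z (q z)) (Hq : forall z, continuous q z).

Lemma is_derive_conv_kernel s u : is_derive (fun v => g s * Q (v - 1 - s)) u (g s * q (u - 1 - s)).
Proof.
  apply (is_derive_scal (fun v => Q (v - 1 - s))).
  pose proof (is_derive_comp Q (fun v => v - 1 - s) u _ 1 (HQ _)) as H.
  replace (q (u - 1 - s)) with (scal 1 (q (u - 1 - s))) by apply Rmult_1_l.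
  apply H; auto_derive; auto; ring.
Qed.

Lemma continuity_2d_conv_kernel u v :
  continuity_2d_pt (fun u v => Derive (fun w => g v * Q (w - 1 - v)) u) u v.
Proof.
  apply continuity_2d_pt_ext with (f := fun u v => g v * q (u - 1 - v)).
  { intros; symmetry; apply is_derive_unique, is_derive_conv_kernel. }
  apply continuity_2d_pt_mult.
  - apply (continuity_1d_2d_pt_comp g (fun _ v => v)).
    + apply continuity_pt_filterlim, Hg.
    + apply continuity_2d_pt_id2.
  - apply (continuity_1d_2d_pt_comp q (fun u v => u - 1 - v)).
    + apply continuity_pt_filterlim, Hq.
    + repeat apply continuity_2d_pt_minus;
        auto using continuity_2d_pt_id1, continuity_2d_pt_id2, continuity_2d_pt_const.
Qed.

Lemma is_derive_conv y : is_derive (conv g Q) y (conv g q y + g y * Q (-1)).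
Proof.
  assert (HQc : forall z, continuous Q z).
  { intro z; apply (ex_derive_continuous (V := R_NormedModule)); eexists; apply HQ. }
  set (f := fun u s => g s * Q (u - 1 - s)).
  assert (Hex : forall u a b, ex_RInt (f u) a b) by (intros; apply ex_RInt_conv, HQc).
  assert (Hder : is_derive (fun u => RInt (f u) (-1) u) y
                   (RInt (fun s => Derive (fun u => f u s) y) (-1) y + f y y * 1)).
  (* Leibniz rule for a parametric integral with a variable upper bound *)
  { apply is_derive_RInt_param_bound_comp_aux3.
    - apply filter_forall; intros; apply Hex.
    - exists (mkposreal 1 Rlt_0_1); apply filter_forall; intros; apply Hex.
    - apply (is_derive_id (K := R_AbsRing)).
    - exists (mkposreal 1 Rlt_0_1); apply filter_forall; intros u s _.
      eexists; apply is_derive_conv_kernel.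
    - intros; apply continuity_2d_conv_kernel.
    - exists (mkposreal 1 Rlt_0_1); intros; apply continuity_2d_conv_kernel.
    - apply continuity_pt_filterlim, (continuous_mult (K := R_AbsRing)), continuous_reflect;
        auto. }
  replace (conv g q y + g y * Q (-1))
    with (RInt (fun s => Derive (fun u => f u s) y) (-1) y + f y y * 1); [exact Hder|].
  unfold f, conv; replace (y - 1 - y) with (-1) by ring; rewrite Rmult_1_r; f_equal.
  apply RInt_ext; intros; apply is_derive_unique, is_derive_conv_kernel.
Qed.

End Kernel.

Lemma RInt_conv (Q q r : R -> R) y :
  (forall z, is_derive Q z (q z)) -> (forall z, is_derive q z (r z)) ->
  (forall z, continuous r z) -> Q (-1) = 0 ->
  RInt (conv g q) (-1) y = conv g Q y.
Proof.
  intros HQ Hq Hr HQ0.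
  assert (Hqc : forall z, continuous q z).
  { intro z; apply (ex_derive_continuous (V := R_NormedModule)); eexists; apply Hq. }
  apply is_RInt_unique.
  replace (conv g Q y) with (minus (conv g Q y) (conv g Q (-1))).
  2: { unfold conv at 2; rewrite RInt_point; change (conv g Q y - 0 = conv g Q y); ring. }
  apply (is_RInt_derive (conv g Q)).
  - intros x _; rewrite <- (Rplus_0_r (conv g q x)), <- (Rmult_0_r (g x)), <- HQ0.
    apply is_derive_conv; assumption.
  - intros x _; apply (ex_derive_continuous (V := R_NormedModule)); eexists.
    apply is_derive_conv; eassumption.
Qed.

End Convolution.

Theorem theorem4p6 (al be : R) (M : nat) (a : nat -> R) (n : nat) (y : R) :
  -1 < al -> -1 < be ->
  (* well-definedness: the denominators appearing in A_{n+1}, B_n, C_{n-1}, S_n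
     and A_{n+1} itself are nonzero (only fails for al+be in {0,-1}, small n) *)
  al + be + INR n <> 0 -> al + be + INR n + 1 <> 0 ->
  al + be + 2 * INR n <> 0 -> al + be + 2 * INR n + 1 <> 0 ->
  -1 <= y <= 1 ->
  Rtilde al be a M (Z.of_nat n + 1) y =
    1 / jacA al be (Z.of_nat n + 1) * RInt (fun s => Rtilde al be a M (Z.of_nat n) s) (-1) y
    - jacB al be (Z.of_nat n) / jacA al be (Z.of_nat n + 1) * Rtilde al be a M (Z.of_nat n) y
    - jacC al be (Z.of_nat n - 1) / jacA al be (Z.of_nat n + 1)
        * Rtilde al be a M (Z.of_nat n - 1) y
    + jacS al be n / jacA al be (Z.of_nat n + 1) * RInt (fM al be a M) (-1) y.
Proof.
  (* the identity holds for every real y *)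
  intros Hal Hbe H1 H2 H3 H4 _.
  set (A := jacA al be (Z.of_nat n + 1)); set (B := jacB al be (Z.of_nat n));
    set (C := jacC al be (Z.of_nat n - 1)); set (Sn := jacS al be n).
  set (P := jacobi al be); set (g := fM al be a M); set (Q := jacobi_antideriv al be n).
  assert (HA : A <> 0) by (apply jacA_neq0; assumption).
  assert (Hg : forall z, continuous g z) by apply continuous_fM.
  assert (HP : forall k z, continuous (P k) z) by apply continuous_jacobi.
  assert (HQ : forall z, continuous Q z) by apply continuous_jacobi_antideriv.
  assert (Hnext : forall t, P (Z.of_nat n + 1)%Z t =
            (1 / A * Q t + - (B / A) * P (Z.of_nat n) t)
            + (- (C / A) * P (Z.of_nat n - 1)%Z t + Sn / A * 1)).
  { intro t; unfold Q, jacobi_antideriv; fold A B C Sn P; field; exact HA. }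
  unfold Rtilde; fold g P; rewrite !RInt_reflect by auto.
  rewrite (RInt_ext _ (conv g (P (Z.of_nat n)))) by (intros; apply RInt_reflect; auto).
  rewrite (RInt_conv g Hg Q (P (Z.of_nat n))
             (upoly (fun k => - INR (S k) / 2 * jcoef al be n (S k)) n)).
  2: { intro; apply is_derive_jacobi_antideriv; assumption. }
  2: { intro; apply is_derive_jacobi. }
  2: { intro; apply continuous_upoly. }
  2: { apply jacobi_antideriv_m1; assumption. }
  transitivity (conv g (fun t => (1 / A * Q t + - (B / A) * P (Z.of_nat n) t)
                                 + (- (C / A) * P (Z.of_nat n - 1)%Z t + Sn / A * 1)) y).
  { apply RInt_ext; intros; rewrite Hnext; reflexivity. }
  rewrite !conv_plus, !conv_scal, conv_one
    by auto using continuous_Rplus, continuous_Rmult_l, continuous_const.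
  unfold Rminus, Rdiv; ring.
Qed.
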